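(* For every positive integer $p$ and every $t\in\{0,\dots,p-1\}$: (1) there exists a $(3p-3t,\ p+3t)$-coloring of $H(3,2p)$ (with main eigenvalue $2p-3$); (2) there exists an $(8p-8t,\ p+8t)$-coloring of $H(4,3p)$ (with main eigenvalue $3p-4$).
   Context: The Hamming graph $H(n,q)$ has vertex set $\mathbb{Z}_q^n$, two vertices adjacent iff they differ in exactly one coordinate. A $(b,c)$-coloring of $H(n,q)$ is a surjective map onto $\{1,2\}$ in which each color-1 vertex has exactly $b$ neighbours of color 2 and each color-2 vertex has exactly $c$ neighbours of color 1; its main eigenvalue is $n(q-1)-(b+c)$. *)

From mathcomp Require Import all_boot all_order all_algebra.
Import GRing.Theory.
Set Implicit Arguments. Unset Strict Implicit. Unset Printing Implicit Defensive.

(* Vertices of the Hamming graph H(n,q): words of length n over an alphabet of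
   size q, i.e. functions 'I_n -> 'I_q (a model of Z_q^n; only the set matters). *)
Definition hvertex (n q : nat) := {ffun 'I_n -> 'I_q}.

Definition hdist (n q : nat) (x y : hvertex n q) : nat := #|[pred i | x i != y i]|.

Definition hadj (n q : nat) (x y : hvertex n q) : bool := hdist x y == 1.

(* A (b,c)-coloring of H(n,q): a surjective map onto {1,2} (here 'I_2 with
   color 1 = 0 and color 2 = 1) such that every color-1 vertex has exactly b
   neighbours of color 2 and every color-2 vertex has exactly c neighbours of
   color 1. *)
Definition is_bc_coloring (n q b c : nat) (f : hvertex n q -> 'I_2) : Prop :=
  (forall k : 'I_2, exists x, f x = k) /\
  (forall x, f x = ord0 -> #|[pred y | hadj x y && (f y == ord_max)]| = b) /\
  (forall x, f x = ord_max -> #|[pred y | hadj x y && (f y == ord0)]| = c).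

Definition main_eigenvalue (n q b c : nat) : int :=
  (Posz (n * (q - 1)%N) - Posz (b + c))%R.

From mathcomp Require Import all_boot all_order all_algebra.
From mathcomp Require Import zify.
Set Implicit Arguments. Unset Strict Implicit. Unset Printing Implicit Defensive.

(* Write each coordinate v of H(n, m p) as v = (v / p) p + (v mod p),
   and fix a predicate P j a on words a of H(n, m) that ignores the letter a_j and holds for
   at most one position j.  Colour x with the second colour iff for some j, P j (x / p) holds
   and the residues of the coordinates other than j sum to less than s modulo p.  Along a line
   through x in direction i, the position j = i contributes all m p points or none, while each
   j <> i contributes exactly s residues per admissible block letter; so the number of
   coloured points on the n lines through x is m p [x coloured] + s B, where B counts the pairs
   j <> i and letters w with P j (a[i := w]).  When B does not depend on a, this gives a
   (s B, n m p - m p - s B)-coloring.  For H(3, 2p) and H(4, 3p) suitable predicates with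
   B = 3 and B = 8 are given by explicit lists of codewords, checked by computation. *)

Lemma card_sum_nat (T : finType) (A : pred T) : #|A| = \sum_t (A t : nat).
Proof.
by rewrite -sum1_card big_mkcond /=; apply: eq_bigr => t _; rewrite unfold_in; case: (A t).
Qed.

Section HammingLines.

Variables n q : nat.
Implicit Types (x y : hvertex n q) (i : 'I_n) (v : 'I_q).

Definition upd x i v : hvertex n q := [ffun k => if k == i then v else x k].

Lemma upd_id x i : upd x i (x i) = x.
Proof. by apply/ffunP => k; rewrite ffunE; case: eqP => // ->. Qed.

Lemma upd_inj x i : injective (upd x i).
Proof. by move=> v w /ffunP/(_ i); rewrite !ffunE eqxx. Qed.

Lemma hadj_upd x y i : y i != x i -> hadj x y = (y == upd x i (y i)).
Proof.
move=> yi_x; have xi_y : x i != y i by rewrite eq_sym.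
rewrite /hadj /hdist (cardD1 i) inE xi_y add1n eqSS.
apply/idP/eqP => [/eqP/card0_eq off_i | ->].
  apply/ffunP => k; rewrite ffunE; case: eqP => [-> //|/eqP ki].
  by move: (off_i k); rewrite !inE ki /=; case: eqP.
apply/eqP; apply: eq_card0 => k; rewrite !inE ffunE.
by case: (k =P i) => [-> //|/eqP ki] /=; rewrite ?eqxx ?andbF //=.
Qed.

Lemma card_hadj_cond x (Q : pred (hvertex n q)) :
  #|[pred y | hadj x y && Q y]| =
  \sum_i #|[pred v | (v != x i) && Q (upd x i v)]|.
Proof.
rewrite card_sum_nat.
transitivity (\sum_y \sum_i ((hadj x y && Q y) && (y i != x i) : nat)).
  apply: eq_bigr => y _ /=; case: (boolP (hadj x y)) => [adj|_]; last by rewrite big1.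
  case: (Q y) => /=; last by rewrite big1.
  move: adj; rewrite /hadj /hdist card_sum_nat => /eqP <-.
  by apply: eq_bigr => i _; rewrite eq_sym.
rewrite exchange_big /=; apply: eq_bigr => i _.
transitivity #|[pred y | hadj x y && Q y && (y i != x i)]|; first by rewrite card_sum_nat.
rewrite -(card_image (@upd_inj x i)); apply: eq_card => y; rewrite !inE.
apply/idP/imageP => [/andP[/andP[adj Qy] yi_x] | [v]].
  have def_y : y = upd x i (y i) by apply/eqP; rewrite -(hadj_upd yi_x).
  by exists (y i); rewrite // inE yi_x -def_y.
rewrite inE => /andP[v_x Qv] ->.
have upd_i : upd x i v i != x i by rewrite ffunE eqxx.
by rewrite Qv upd_i (hadj_upd upd_i) ffunE eqxx !andbT.
Qed.

(* The n lines through x each contain x itself, hence the correction n * Q x. *)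
Lemma card_hadj_lines x (Q : pred (hvertex n q)) :
  #|[pred y | hadj x y && Q y]| + n * Q x = \sum_i #|[pred v | Q (upd x i v)]|.
Proof.
rewrite card_hadj_cond -[n in n * _]card_ord -sum_nat_const -big_split /=.
apply: eq_bigr => i _; rewrite [in RHS](cardD1 (x i)) inE upd_id addnC.
by congr (_ + _); apply: eq_card => v; rewrite !inE.
Qed.

Lemma card_hadj x : #|[pred y | hadj x y]| = n * q.-1.
Proof.
have line_size i : #|[pred v : 'I_q | predT (upd x i v)]| = q.
  by rewrite -[RHS](card_ord q); apply: eq_card.
have := card_hadj_lines x predT; rewrite (eq_bigr _ (fun i _ => line_size i)).
rewrite sum_nat_const card_ord (eq_card (B := [pred y | hadj x y])) => [|y]; last first.
  by rewrite !inE andbT.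
by rewrite [predT x]/= muln1 -subn1 mulnBr muln1 => <-; rewrite addnK.
Qed.

Lemma bc_coloring_surj b c (f : hvertex n q -> 'I_2) x0 : 0 < b -> 0 < c ->
  (forall x, f x = ord0 -> #|[pred y | hadj x y && (f y == ord_max)]| = b) ->
  (forall x, f x = ord_max -> #|[pred y | hadj x y && (f y == ord0)]| = c) ->
  forall k : 'I_2, exists x, f x = k.
Proof.
move=> b_gt0 c_gt0 nbr0 nbr1.
have ord2P (k : 'I_2) : k = ord0 \/ k = ord_max.
  by case: k => [[|[|//]] ?]; [left | right]; apply: val_inj.
have colored_nbr x k : 0 < #|[pred y | hadj x y && (f y == k)]| -> exists y, f y = k.
  by case/card_gt0P => y /andP[_ /eqP]; exists y.
have [x1 fx1] : exists x, f x = ord_max.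
  case: (ord2P (f x0)) => [/nbr0 nbr_x0 | fx0]; last by exists x0.
  by apply: (colored_nbr x0); rewrite nbr_x0.
have [x2 fx2] : exists x, f x = ord0 by apply: (colored_nbr x1); rewrite nbr1.
by move=> k; case: (ord2P k) => ->; [exists x2 | exists x1].
Qed.

End HammingLines.

Lemma sum_ord_mul (m p : nat) (F : nat -> nat) :
  \sum_(v < m * p) F v = \sum_(a < m) \sum_(r < p) F (a * p + r).
Proof.
elim: m => [|m IH]; first by rewrite !big_ord0.
by rewrite mulSnr big_split_ord /= IH big_ord_recr.
Qed.

Lemma sum_mod_shift (p R s : nat) : 0 < p -> s <= p ->
  \sum_(r < p) ((r + R) %% p < s : nat) = s.
Proof.
move=> p_gt0 le_sp.
pose h (r : 'I_p) : 'I_p := Ordinal (ltn_pmod (r + R) p_gt0).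
have h_inj : injective h.
  move=> r1 r2 /(congr1 val) /= /eqP; rewrite eqn_modDr !modn_small // => /eqP.
  exact: val_inj.
transitivity (\sum_(r < p) (r < s : nat)); first by rewrite [RHS](reindex_inj h_inj).
transitivity (\sum_(r < s) 1); last by rewrite sum_nat_const card_ord muln1.
rewrite (big_ord_widen _ (fun=> 1) le_sp) [RHS]big_mkcond.
by apply: eq_bigr => r _; case: (r < s).
Qed.

Section LiftedDesign.

Variables (n m p s B : nat) (P : 'I_n -> hvertex n m -> bool).
Hypotheses (p_gt0 : 0 < p) (le_sp : s <= p).
Hypothesis P_local : forall j a w, P j (upd a j w) = P j a.
Hypothesis P_unique : forall a j j', P j a -> P j' a -> j = j'.
Hypothesis P_flips : forall a, \sum_i \sum_(j | j != i) \sum_(w : 'I_m) P j (upd a i w) = B.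

Implicit Types (x : hvertex n (m * p)) (i j : 'I_n).

Lemma divn_ord_lt (v : 'I_(m * p)) : v %/ p < m.
Proof. by case: p v => [|p'] [v lt_v] /=; [rewrite muln0 in lt_v | rewrite ltn_divLR]. Qed.

Definition block_ord (v : 'I_(m * p)) : 'I_m := Ordinal (divn_ord_lt v).

Definition block x : hvertex n m := [ffun k => block_ord (x k)].

Definition residue_off x j : nat := \sum_(k | k != j) x k %% p.

Definition layer j x : bool := P j (block x) && (residue_off x j %% p < s).

Definition lifted x : bool := [exists j, layer j x].

Definition lifted_coloring x : 'I_2 := if lifted x then ord_max else ord0.

Lemma block_upd x i v : block (upd x i v) = upd (block x) i (block_ord v).
Proof. by apply/ffunP => k; rewrite !ffunE; case: eqP. Qed.

Lemma lifted_sum x : (lifted x : nat) = \sum_j (layer j x : nat).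
Proof.
rewrite /lifted; case: existsP => [[j0 layer_j0] | no_layer]; last first.
  by rewrite big1 // => j _; case: (boolP (layer j x)) => // ?; case: no_layer; exists j.
rewrite (bigD1 j0) //= layer_j0 big1 // => j j_j0; case: (boolP (layer j x)) => // /andP[Pj _].
by case/andP: layer_j0 => Pj0 _; rewrite (P_unique Pj Pj0) eqxx in j_j0.
Qed.

Lemma layer_upd_same x i v : layer i (upd x i v) = layer i x.
Proof.
rewrite /layer block_upd P_local /residue_off; congr (_ && (_ %% p < s)).
by apply: eq_bigr => k ki; rewrite ffunE (negbTE ki).
Qed.

Lemma card_block_residue (w : 'I_m) R :
  #|[pred v : 'I_(m * p) | (block_ord v == w) && ((v %% p + R) %% p < s)]| = s.
Proof.
rewrite card_sum_nat (sum_ord_mul m p (fun v => ((v %/ p == w) && ((v %% p + R) %% p < s) : nat))).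
rewrite (bigD1 w) //= [X in _ + X]big1 => [|a a_w]; last first.
  by rewrite big1 // => r _; rewrite divnMDl // divn_small // addn0 -[_ == _]/(a == w) (negbTE a_w).
rewrite addn0 -[RHS](sum_mod_shift R p_gt0 le_sp); apply: eq_bigr => r _.
by rewrite divnMDl // divn_small // addn0 eqxx /= modnMDl (modn_small (ltn_ord r)).
Qed.

(* A change in coordinate i <> j moves the block letter through all of 'I_m and the residue
   sum seen by j through all of Z_p, of which exactly s values are below s. *)
Lemma sum_layer_upd_other x i j : j != i ->
  \sum_(v : 'I_(m * p)) layer j (upd x i v) = s * \sum_(w : 'I_m) P j (upd (block x) i w).
Proof.
move=> j_i; set R := \sum_(k | (k != j) && (k != i)) x k %% p.
have residue_upd v : residue_off (upd x i v) j = v %% p + R.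
  rewrite /residue_off (bigD1 i) 1?eq_sym //= ffunE eqxx; congr (_ + _).
  by apply: eq_bigr => k /andP[_ ki]; rewrite ffunE (negbTE ki).
rewrite big_distrr (partition_big block_ord xpredT) //=; apply: eq_bigr => w _.
rewrite -(card_block_residue w R) [RHS]mulnC card_sum_nat big_mkcond /=.
rewrite big_distrr /=; apply: eq_bigr => v _; rewrite /layer block_upd residue_upd.
by case: eqP => [-> | _] /=; case: (P _ _); rewrite ?mul1n ?muln0.
Qed.

Lemma card_hadj_lifted x :
  #|[pred y | hadj x y && lifted y]| + n * lifted x = m * p * lifted x + s * B.
Proof.
rewrite card_hadj_lines.
transitivity (\sum_i (m * p * layer i x
                      + s * \sum_(j | j != i) \sum_(w : 'I_m) P j (upd (block x) i w))).
  apply: eq_bigr => i _; rewrite card_sum_nat.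
  under eq_bigr => v _ do rewrite lifted_sum.
  rewrite exchange_big (bigD1 i) //=; congr (_ + _).
    under eq_bigr => v _ do rewrite layer_upd_same.
    by rewrite sum_nat_const card_ord.
  by rewrite big_distrr; apply: eq_bigr => j; apply: sum_layer_upd_other.
by rewrite big_split /= -!big_distrr -lifted_sum P_flips.
Qed.

Lemma card_hadj_colored x k :
  #|[pred y | hadj x y && (lifted_coloring y == k)]| =
  #|[pred y | hadj x y && (if k == ord_max then lifted y else ~~ lifted y)]|.
Proof.
apply: eq_card => y; rewrite !inE /lifted_coloring.
by case: (lifted y); case: (k =P ord_max) => [-> | ]; case: k => [[|[|//]] ?] //= /eqP.
Qed.

Theorem lifted_coloringP c : c + s * B + m * p = n * (m * p) -> 0 < s * B -> 0 < c ->
  is_bc_coloring (s * B) c lifted_coloring.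
Proof.
move=> def_c b_gt0 c_gt0.
have mp_gt0 : 0 < m * p.
  by rewrite lt0n; apply/eqP => mp0; move: def_c; rewrite mp0 muln0; lia.
have colorE x : lifted_coloring x = if lifted x then ord_max else ord0 by [].
have nbr0 x : lifted_coloring x = ord0 ->
    #|[pred y | hadj x y && (lifted_coloring y == ord_max)]| = s * B.
  rewrite colorE card_hadj_colored eqxx; case: (lifted x) (card_hadj_lifted x) => //= count_x _.
  by rewrite !muln0 !addn0 in count_x.
have nbr1 x : lifted_coloring x = ord_max ->
    #|[pred y | hadj x y && (lifted_coloring y == ord0)]| = c.
  rewrite colorE card_hadj_colored; case: (lifted x) (card_hadj_lifted x) => //= count_x _.
  have deg_x : #|[pred y | hadj x y && lifted y]| + #|[pred y | hadj x y && ~~ lifted y]|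
               = n * (m * p).-1.
    rewrite -(card_hadj x) !card_sum_nat -big_split; apply: eq_bigr => y _ /=.
    by case: (hadj x y); case: (lifted y).
  move: def_c count_x deg_x (leq_pmulr n mp_gt0); rewrite !muln1 -subn1 mulnBr muln1.
  move: #|[pred y | hadj x y && lifted y]| #|[pred y | hadj x y && ~~ lifted y]| => N1 N0.
  by move: (n * (m * p)) (m * p) => N mp; lia.
split; [|split] => //.
exact: (bc_coloring_surj [ffun=> Ordinal mp_gt0] b_gt0 c_gt0 nbr0 nbr1).
Qed.

End LiftedDesign.

(* Designs given by codeword lists: P j a holds iff the word a with its j-th letter deleted
   lies in L j.  This makes P j independent of a_j, and the remaining two hypotheses become
   finite checks on all words of length n over {0, ..., m - 1}. *)
Section CodeDesigns.

Variable L : nat -> seq (seq nat).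

Definition word n m (a : hvertex n m) : seq nat := [seq val (a k) | k <- enum 'I_n].

Definition skip j (w : seq nat) : seq nat := take j w ++ drop j.+1 w.

Definition coded n m (j : 'I_n) (a : hvertex n m) : bool := skip j (word a) \in L j.

Fixpoint words n m : seq (seq nat) :=
  if n is n'.+1 then [seq x :: w | x <- iota 0 m, w <- words n' m] else [:: [::]].

Definition codes_disjoint n (w : seq nat) : bool :=
  all (fun j => all (fun j' => (skip j w \in L j) ==> (skip j' w \in L j') ==> (j == j'))
    (iota 0 n)) (iota 0 n).

Definition code_flips n m (w : seq nat) : nat :=
  \sum_(0 <= i < n) \sum_(0 <= j < n | j != i) \sum_(0 <= v < m)
    (skip j (set_nth 0 w i v) \in L j : nat).

Lemma size_word n m (a : hvertex n m) : size (word a) = n.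
Proof. by rewrite size_map size_enum_ord. Qed.

Lemma nth_word n m (a : hvertex n m) (k : 'I_n) : nth 0 (word a) k = a k.
Proof. by rewrite (nth_map k) ?size_enum_ord // nth_ord_enum. Qed.

Lemma word_upd n m (a : hvertex n m) i v : word (upd a i v) = set_nth 0 (word a) i v.
Proof.
apply: (@eq_from_nth _ 0) => [|k]; rewrite ?size_set_nth !size_word; first by apply/esym/maxn_idPr.
move=> lt_kn; rewrite nth_set_nth /= -[k]/(val (Ordinal lt_kn)) !nth_word ffunE.
by rewrite -val_eqE; case: eqP.
Qed.

Lemma skip_set_nth j (w : seq nat) v : j < size w -> skip j (set_nth 0 w j v) = skip j w.
Proof. by elim: w j => [|x w IH] [|j] //= lt_jw; rewrite /skip /= -!/(skip _ _) IH. Qed.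

Lemma mem_words n m w : (w \in words n m) = (size w == n) && all (fun x => x < m) w.
Proof.
elim: n w => [|n IH] [|x w] //=.
  by apply/negbTE/allpairsPdep => [[y [u [_ _ /eqP]]]].
rewrite eqSS andbCA -IH; apply/allpairsPdep/andP => [[y [u [y_m u_w [-> ->]]]] | [x_m w_n]].
  by move: y_m; rewrite mem_iota add0n.
by exists x, w; rewrite mem_iota add0n.
Qed.

Lemma word_mem_words n m (a : hvertex n m) : word a \in words n m.
Proof.
by rewrite mem_words size_word eqxx; apply/allP => _ /mapP[k _ ->]; apply: ltn_ord.
Qed.

Lemma coded_local n m (j : 'I_n) (a : hvertex n m) w : coded j (upd a j w) = coded j a.
Proof. by rewrite /coded word_upd skip_set_nth // size_word. Qed.

Lemma coded_unique n m : all (codes_disjoint n) (words n m) ->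
  forall (a : hvertex n m) j j', coded j a -> coded j' a -> j = j'.
Proof.
move=> /allP /(_ _ (word_mem_words _)) disj a j j' Pj Pj'; apply: val_inj; apply/eqP.
move: (disj a) => /allP /(_ j); rewrite mem_iota ltn_ord => /(_ isT).
move=> /allP /(_ j'); rewrite mem_iota ltn_ord => /(_ isT).
by move: Pj Pj'; rewrite /coded => -> ->.
Qed.

Lemma coded_flips n m B : all (fun w => code_flips n m w == B) (words n m) ->
  forall a : hvertex n m, \sum_i \sum_(j | j != i) \sum_(w : 'I_m) coded j (upd a i w) = B.
Proof.
move=> /allP /(_ _ (word_mem_words _)) flips a; rewrite -(eqP (flips a)) /code_flips big_mkord.
apply: eq_bigr => i _; rewrite big_mkord; apply: eq_big => // j _.
by rewrite big_mkord; apply: eq_bigr => v _; rewrite /coded word_upd.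
Qed.

End CodeDesigns.

Definition codes3 (j : nat) : seq (seq nat) := [:: if j == 1 then [:: 1; 0] else [:: 0; 1]].

Definition codes4 (j : nat) : seq (seq nat) :=
  match j with
  | 0 => [:: [:: 0; 0; 1]; [:: 0; 0; 2]; [:: 0; 1; 0]; [:: 0; 1; 2]; [:: 1; 1; 0]; [:: 2; 0; 1]]
  | 1 => [:: [:: 0; 1; 1]; [:: 1; 0; 0]; [:: 2; 0; 0]; [:: 2; 1; 1]; [:: 2; 2; 0]; [:: 2; 2; 1]]
  | 2 => [:: [:: 0; 2; 0]; [:: 0; 2; 2]; [:: 1; 1; 1]; [:: 1; 1; 2]; [:: 2; 1; 2]; [:: 2; 2; 2]]
  | _ => [:: [:: 0; 0; 2]; [:: 0; 1; 0]; [:: 0; 1; 2]; [:: 1; 0; 2]; [:: 1; 2; 1]; [:: 1; 2; 2]]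
  end.

Lemma codes3_design : all (codes_disjoint codes3 3) (words 3 2) /\
                      all (fun w => code_flips codes3 3 2 w == 3) (words 3 2).
Proof. by rewrite /code_flips unlock; split; vm_compute. Qed.

Lemma codes4_design : all (codes_disjoint codes4 4) (words 4 3) /\
                      all (fun w => code_flips codes4 4 3 w == 8) (words 4 3).
Proof. by rewrite /code_flips unlock; split; vm_compute. Qed.

Lemma coded_coloring n m p s B L c : 0 < p -> 0 < s <= p -> 0 < B -> 0 < c ->
  c + s * B + m * p = n * (m * p) ->
  all (codes_disjoint L n) (words n m) -> all (fun w => code_flips L n m w == B) (words n m) ->
  exists f : hvertex n (m * p) -> 'I_2, is_bc_coloring (s * B) c f.
Proof.
move=> p_gt0 /andP[s_gt0 le_sp] B_gt0 c_gt0 def_c disj flips.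
exists (lifted_coloring (p := p) s (coded L (m := m))).
apply: lifted_coloringP => //; [exact: coded_local | exact: coded_unique | exact: coded_flips |].
by rewrite muln_gt0 s_gt0.
Qed.

Theorem corollary2 (p t : nat) (hp : 0 < p) (ht : t < p) :
  ((exists f : hvertex 3 (2 * p) -> 'I_2,
      is_bc_coloring (3 * p - 3 * t) (p + 3 * t) f) /\
   main_eigenvalue 3 (2 * p) (3 * p - 3 * t) (p + 3 * t) = (Posz (2 * p) - 3)%R) /\
  ((exists f : hvertex 4 (3 * p) -> 'I_2,
      is_bc_coloring (8 * p - 8 * t) (p + 8 * t) f) /\
   main_eigenvalue 4 (3 * p) (8 * p - 8 * t) (p + 8 * t) = (Posz (3 * p) - 4)%R).
Proof.
have s_range : 0 < p - t <= p by apply/andP; lia.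
have [disj3 flips3] := codes3_design; have [disj4 flips4] := codes4_design.
split; split; try by rewrite /main_eigenvalue; lia.
- rewrite (_ : 3 * p - 3 * t = (p - t) * 3); last by lia.
  by apply: coded_coloring disj3 flips3 => //; lia.
- rewrite (_ : 8 * p - 8 * t = (p - t) * 8); last by lia.
  by apply: coded_coloring disj4 flips4 => //; lia.
Qed.
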